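(* For $n\geq 1$ and $m\geq 1$, the forcing spectrum $\mathrm{Spec}(C(2m-1,2n+1))$ is an integer interval (i.e. it is continuous).
   Context: $C(k,n)$ denotes the graph with vertices $(a,b)$, $a\in\mathbb{Z}_n$, $0\le b\le k$, and edges $(a,b)(a+1,b)$ and $(a,b)(a,b+1)$ (the grid graph of a quadriculated cylinder with $k$ rows of $n$ squares). For a perfect matching $M$ of a graph $G$, a subset $S\subseteq M$ is a forcing set of $M$ if no other perfect matching of $G$ contains $S$; the forcing number $f(G,M)$ is the minimum size of a forcing set. The forcing spectrum $\mathrm{Spec}(G)$ is the set of forcing numbers of all perfect matchings of $G$; it is continuous if it is a set of consecutive integers. *)

From mathcomp Require Import all_boot.
Set Implicit Arguments. Unset Strict Implicit. Unset Printing Implicit Defensive.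

Definition cyl_vertex (k n : nat) := ('I_n * 'I_k.+1)%type.

(* Adjacency of C(k,n): (a,b)(a+1,b) (indices mod n) and (a,b)(a,b+1). *)
Definition cyl_adj (k n : nat) : rel (cyl_vertex k n) :=
  fun x y =>
    ((x.2 == y.2 :> nat) &&
       (((x.1 : nat).+1 %% n == y.1) || ((y.1 : nat).+1 %% n == x.1)))
    || ((x.1 == y.1) &&
       (((x.2 : nat).+1 == y.2) || ((y.2 : nat).+1 == x.2))).

Section Matching.
Variables (V : finType) (adj : rel V).

Definition is_edge (E : {set V}) : Prop :=
  exists x y, adj x y /\ x != y /\ E = [set x; y].

Definition perfect_matching (M : {set {set V}}) : Prop :=
  (forall E, E \in M -> is_edge E) /\
  (forall v : V, #|[set E in M | v \in E]| = 1).

Definition forcing_set (M S : {set {set V}}) : Prop :=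
  S \subset M /\
  (forall M', perfect_matching M' -> S \subset M' -> M' = M).

Definition forcing_number (M : {set {set V}}) (f : nat) : Prop :=
  (exists S, forcing_set M S /\ #|S| = f) /\
  (forall S, forcing_set M S -> f <= #|S|).

Definition forcing_spectrum (f : nat) : Prop :=
  exists M, perfect_matching M /\ forcing_number M f.

Definition continuous_nat_set (P : nat -> Prop) : Prop :=
  forall a b c, P a -> P b -> a <= c <= b -> P c.

End Matching.

Definition C_graph_spectrum (k n : nat) : nat -> Prop :=
  forcing_spectrum (@cyl_adj k n).

(* A twist replaces the two edges of a perfect matching that lie on a 4-cycle
   by the other two edges of the cycle.  It raises the forcing number by at most
   one: if S forces M, then S with the old cycle edges removed and the new ones
   added forces the twisted matching.  Twists can be undone, so the forcing
   spectrum is an interval as soon as any two perfect matchings are joined by a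
   chain of twists.

   On C(k,n) with k and n odd, measure a perfect matching M by heights: h(a,t)
   counts the horizontal edges of M between columns a and a+1 below row t, the
   edge in row y with sign (-1)^y.  Counting at the vertices of column a+1 gives
   h(a,t) + h(a+1,t) in {0,1}, and 0 at the top, where an even number k+1 of
   rows lies below; going round the odd cycle of columns then forces
   h(a,k+1) = 0.  Where a height reaches its extreme value one finds either two
   stacked horizontal edges or two side-by-side vertical edges, and twisting
   them moves that height towards 0.  So the sum of the |h(a,t)| can be lowered
   until every height vanishes, i.e. until M has no horizontal edge, and the
   all-vertical perfect matching is unique. *)

From mathcomp Require Import all_boot ssralg ssrnum ssrint zify.
From Stdlib Require Import Classical Wf_nat Relation_Operators.
Set Implicit Arguments. Unset Strict Implicit. Unset Printing Implicit Defensive.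
Import GRing.Theory.

Lemma disjointP (T : finType) (A B : {pred T}) :
  reflect (forall x, x \in A -> x \in B -> False) [disjoint A & B].
Proof.
apply: (iffP pred0P) => [h x xA xB | h x /=]; first by have := h x; rewrite /= xA xB.
by apply/negbTE/andP=> -[]; apply: h.
Qed.

Definition exchange (T : finType) (D A S : {set T}) := A :|: (S :\: D).

Lemma exchangeS (T : finType) (D A S M : {set T}) :
  S \subset M -> exchange D A S \subset exchange D A M.
Proof. by move=> sSM; rewrite setUS // setSD. Qed.

Lemma exchangeK (T : finType) (D A S : {set T}) :
  [disjoint A & S] -> exchange A D (exchange D A S) = D :|: S.
Proof.
move=> dAS; apply/setP=> x; rewrite !inE.
case: (boolP (x \in A)) => [xA|_]; first by rewrite (disjointFr dAS xA) !andbF orbF.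
by rewrite /= orb_andr orbN.
Qed.

Lemma card_exchange (T : finType) (D A S : {set T}) :
  #|exchange D A S| <= #|A| + (#|S| - #|S :&: D|).
Proof. by rewrite /exchange -cardsD leq_card_setU. Qed.

Lemma disjoint_set2 (T : finType) (a b c d : T) : uniq [:: a; b; c; d] ->
  [disjoint [set a; b] & [set c; d]].
Proof.
rewrite /= !inE !negb_or -!andbA => /and5P[_ ac ad bc /and3P[bd _ _]].
apply/disjointP=> x; rewrite !in_set2 => /orP[]/eqP-> /orP[]/eqP e;
  by rewrite e eqxx in ac ad bc bd.
Qed.

Lemma card_set2_incident (T : finType) (x y : {set T}) (v : T) : [disjoint x & y] ->
  #|[set E in [set x; y] | v \in E]| = (v \in x :|: y).
Proof.
move=> dxy; rewrite inE.
have [vx|nvx] /= := boolP (v \in x).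
  apply/eqP/cards1P; exists x; apply/setP=> E; rewrite !inE.
  have [->|_] := eqVneq E x; first by rewrite vx.
  by have [->|] := eqVneq E y; rewrite ?(disjointFr dxy vx).
have [vy|nvy] /= := boolP (v \in y).
  apply/eqP/cards1P; exists y; apply/setP=> E; rewrite !inE.
  have [->|_] := eqVneq E y; first by rewrite vy orbT.
  by have [->|] := eqVneq E x; rewrite ?(negbTE nvx).
apply/eqP; rewrite cards_eq0; apply/eqP/setP=> E; rewrite !inE.
by apply/negbTE/andP=> -[/orP[]/eqP->]; apply/negP.
Qed.

Section Twist.
Variables (V : finType) (adj : rel V).
Local Notation pm := (perfect_matching adj).
Implicit Types (M S D A : {set {set V}}) (E : {set V}) (u v : V).

Lemma pm_cover M v : pm M -> exists2 E, E \in M & v \in E.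
Proof.
case=> _ /(_ v) /eqP/cards1P[E hE].
have : E \in [set E0 in M | v \in E0] by rewrite hE set11.
by rewrite inE => /andP[]; exists E.
Qed.

Lemma pm_uniq M v E1 E2 : pm M -> E1 \in M -> E2 \in M ->
  v \in E1 -> v \in E2 -> E1 = E2.
Proof.
case=> _ /(_ v) /eqP/cards1P[E hE] ME1 ME2 vE1 vE2.
have : E1 \in [set E0 in M | v \in E0] by rewrite inE ME1.
have : E2 \in [set E0 in M | v \in E0] by rewrite inE ME2.
by rewrite hE !inE => /eqP-> /eqP->.
Qed.

Lemma pm_edge M E : pm M -> E \in M -> is_edge adj E.
Proof. by case=> edgeM _; apply: edgeM. Qed.

Lemma pm_forcing_self M : pm M -> forcing_set adj M M.
Proof.
move=> pmM; split=> // M' pmM' sMM'; apply/eqP; rewrite eqEsubset sMM' andbT.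
apply/subsetP=> E M'E; have [x [y [_ [_ defE]]]] := pm_edge pmM' M'E.
have [E' ME' xE'] := pm_cover x pmM.
have xE : x \in E by rewrite defE set21.
by rewrite (pm_uniq pmM' M'E (subsetP sMM' _ ME') xE xE').
Qed.

Lemma forcing_number_exists M : pm M -> exists f, forcing_number adj M f.
Proof.
move=> pmM; pose P f := exists S, forcing_set adj M S /\ #|S| = f.
have [|f [[[S [fS cardS]] minf] _]] :=
  @dec_inh_nat_subset_has_unique_least_element P (fun f => classic (P f)).
  by exists #|M|, M; split=> //; apply: pm_forcing_self.
exists f; split; first by exists S.
by move=> S' fS'; apply/leP/minf; exists S'.
Qed.

Lemma forcing_number_uniq M f f' :
  forcing_number adj M f -> forcing_number adj M f' -> f = f'.
Proof.
move=> [[S [fS <-]] minf] [[S' [fS' <-]] minf'].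
by apply/eqP; rewrite eqn_leq minf // minf'.
Qed.

Definition square u1 u2 u3 u4 :=
  [/\ uniq [:: u1; u2; u3; u4], adj u1 u2, adj u2 u3, adj u3 u4 & adj u4 u1].

Definition square_matchings D A := exists u1 u2 u3 u4, [/\ square u1 u2 u3 u4,
  D = [set [set u1; u2]; [set u3; u4]] & A = [set [set u2; u3]; [set u4; u1]]].

Lemma pm_exchange M D A : pm M -> D \subset M -> [disjoint A & M] ->
  {in A, forall E, is_edge adj E} ->
  (forall v, #|[set E in A | v \in E]| = #|[set E in D | v \in E]|) ->
  pm (exchange D A M).
Proof.
move=> pmM sDM dAM edgeA balanced; split=> [E|v].
  by rewrite !inE => /orP[/edgeA //|/andP[_ /(pm_edge pmM)]].
have -> : [set E in exchange D A M | v \in E] =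
    [set E in A | v \in E] :|: ([set E in M | v \in E] :\: [set E in D | v \in E]).
  by apply/setP=> E; rewrite !inE; case: (v \in E); rewrite ?andbF ?andbT.
have sDvMv : [set E in D | v \in E] \subset [set E in M | v \in E].
  by apply/subsetP=> E; rewrite !inE => /andP[/(subsetP sDM) -> ->].
have dAvMv : [disjoint [set E in A | v \in E]
                     & [set E in M | v \in E] :\: [set E in D | v \in E]].
  apply/disjointP=> E; rewrite !inE => /andP[AE _] /andP[_ /andP[ME _]].
  by rewrite (disjointFr dAM AE) in ME.
have := subset_leq_card sDvMv; case: pmM => _ /(_ v) cardMv.
by rewrite cardsU (disjoint_setI0 dAvMv) cards0 subn0 cardsDS // cardMv balanced; lia.
Qed.

Lemma square_rot u1 u2 u3 u4 : square u1 u2 u3 u4 -> square u2 u3 u4 u1.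
Proof. by case=> uq a12 a23 a34 a41; split=> //; move: uq; rewrite -(rot_uniq 1). Qed.

Lemma square_matchingsC D A : square_matchings D A -> square_matchings A D.
Proof.
case=> u1 [u2 [u3 [u4 [sq -> ->]]]]; exists u2, u3, u4, u1.
by split; [apply: square_rot | | rewrite setUC].
Qed.

Lemma square_matchings_edge D A : square_matchings D A -> {in A, forall E, is_edge adj E}.
Proof.
case=> u1 [u2 [u3 [u4 [[uq _ a23 _ a41] _ ->]]]] E; move: uq.
rewrite /= !inE !negb_or -!andbA => /and5P[_ _ n14 n23 _].
by case/orP=> /eqP->; [exists u2, u3 | exists u4, u1; rewrite eq_sym].
Qed.

Lemma square_matchings_disjoint D A : square_matchings D A -> [disjoint D & A].
Proof.
case=> u1 [u2 [u3 [u4 [[uq _ _ _ _] -> ->]]]]; move: uq.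
rewrite /= !inE !negb_or -!andbA => /and5P[n12 n13 n14 n23 /and3P[n24 n34 _]].
have neq (x : V) (X Y : {set V}) : x \in X -> x \notin Y -> X != Y.
  by move=> xX nxY; apply: contraNneq nxY => <-.
apply/disjointP=> E; rewrite !in_set2 => /orP[]/eqP-> /orP[]/eqP/eqP; apply/negP.
- by apply: (neq u1); rewrite !in_set2 ?eqxx // negb_or n12 n13.
- by apply: (neq u2); rewrite !in_set2 ?eqxx ?orbT // negb_or n24 eq_sym n12.
- by apply: (neq u4); rewrite !in_set2 ?eqxx ?orbT // negb_or eq_sym n24 eq_sym n34.
- by apply: (neq u3); rewrite !in_set2 ?eqxx // negb_or n34 eq_sym n13.
Qed.

Lemma square_matchings_balanced D A v : square_matchings D A ->
  #|[set E in A | v \in E]| = #|[set E in D | v \in E]|.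
Proof.
case=> u1 [u2 [u3 [u4 [[uq _ _ _ _] -> ->]]]].
have uq' : uniq [:: u2; u3; u4; u1] by move: uq; rewrite -(rot_uniq 1).
rewrite !card_set2_incident ?disjoint_set2 //; congr (nat_of_bool _).
by rewrite !inE; case: (v == u1); case: (v == u2); case: (v == u3); case: (v == u4).
Qed.

Lemma square_matchings_disjoint_pm M D A : pm M -> square_matchings D A -> D \subset M ->
  [disjoint A & M].
Proof.
move=> pmM sqDA sDM; apply/disjointP=> E AE ME.
have [x [y [_ [_ defE]]]] := square_matchings_edge sqDA AE.
have xE : x \in E by rewrite defE set21.
have : 0 < #|[set E in D | x \in E]|.
  rewrite -(square_matchings_balanced x sqDA) card_gt0.
  by apply/set0Pn; exists E; rewrite inE AE.
case/card_gt0P=> E'; rewrite inE => /andP[DE' xE'].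
have eEE' := pm_uniq pmM ME (subsetP sDM _ DE') xE xE'.
by rewrite eEE' in AE; rewrite (disjointFr (square_matchings_disjoint sqDA) DE') in AE.
Qed.

Lemma square_matchings_card D A : square_matchings D A -> 0 < #|A| <= 2.
Proof. by case=> u1 [u2 [u3 [u4 [_ _ ->]]]]; rewrite cards2; case: (_ != _). Qed.

Definition twist M M' := pm M /\
  exists D A, [/\ square_matchings D A, D \subset M & M' = exchange D A M].

Lemma twist_pm M M' : twist M M' -> pm M'.
Proof.
case=> pmM [D [A [sqDA sDM ->]]].
apply: pm_exchange (square_matchings_disjoint_pm pmM sqDA sDM) _ _ => //.
- exact: square_matchings_edge sqDA.
- by move=> v; apply: square_matchings_balanced.
Qed.

Lemma exchange_twistK M D A : pm M -> square_matchings D A -> D \subset M ->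
  exchange A D (exchange D A M) = M.
Proof.
move=> pmM sqDA sDM.
by rewrite exchangeK ?(setUidPr sDM) ?(square_matchings_disjoint_pm pmM sqDA sDM).
Qed.

Lemma twist_sym M M' : twist M M' -> twist M' M.
Proof.
move=> twMM'; split; first exact: twist_pm twMM'.
case: twMM' => pmM [D [A [sqDA sDM ->]]]; exists A, D; split.
- exact: square_matchingsC.
- exact: subsetUl.
- by rewrite exchange_twistK.
Qed.

Lemma forcing_number_twist M M' f f' : twist M M' ->
  forcing_number adj M f -> forcing_number adj M' f' -> f' <= f.+1.
Proof.
move=> twMM'; have pmM' := twist_pm twMM'.
case: twMM' => pmM [D [A [sqDA sDM defM']]] [[S [[sSM forceS] <-]] _] [_ minf'].
have dAM := square_matchings_disjoint_pm pmM sqDA sDM.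
have cardA := square_matchings_card sqDA.
have meetSD : 0 < #|S :&: D|.
  rewrite card_gt0 setI_eq0; apply/negP=> dSD.
  have sSM' : S \subset M' by rewrite defM'; apply/subsetU/orP; right; apply/subsetDP.
  have sAM : A \subset M by rewrite -(forceS M' pmM' sSM') defM' subsetUl.
  case/andP: cardA => /card_gt0P[E AE] _.
  by have := subsetP sAM _ AE; rewrite (disjointFr dAM AE).
have forceS' : forcing_set adj M' (exchange D A S).
  split; first by rewrite defM' exchangeS.
  move=> M'' pmM'' sS'M''.
  have sAM'' : A \subset M'' := subset_trans (subsetUl _ _) sS'M''.
  have sqAD := square_matchingsC sqDA.
  have twM'' : twist M'' (exchange A D M'') by split=> //; exists A, D.
  have -> : M'' = exchange D A (exchange A D M'') by rewrite exchange_twistK.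
  rewrite defM'; congr (exchange D A _); apply: forceS (twist_pm twM'') _.
  apply: subset_trans (exchangeS A D sS'M''); rewrite exchangeK ?subsetUr //.
  exact: disjointWr sSM dAM.
apply: leq_trans (minf' _ forceS') _; apply: leq_trans (card_exchange D A S) _.
have := subset_leq_card (subsetIl S D).
by case/andP: cardA => _; move: meetSD; lia.
Qed.

Local Notation twist_connected := (clos_refl_trans _ twist).

Lemma twist_connected_pm M M' : twist_connected M M' -> pm M -> pm M'.
Proof. by elim=> // [X Y /twist_pm //|X Y Z _ IH1 _ IH2 /IH1]. Qed.

Lemma twist_connected_sym M M' : twist_connected M M' -> twist_connected M' M.
Proof.
elim=> [X Y twXY|X|X Y Z _ IH1 _ IH2].
- exact/rt_step/twist_sym.
- exact: rt_refl.
- exact: rt_trans IH2 IH1.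
Qed.

Lemma forcing_spectrum_between M M' a b c : twist_connected M M' -> pm M ->
  forcing_number adj M a -> forcing_number adj M' b -> a <= c <= b ->
  forcing_spectrum adj c.
Proof.
move=> connMM'; elim: connMM' a b c => {M M'} [M M' twMM'|M|M X M' connMX IH1 _ IH2]
  a b c pmM fa fb /andP[ac cb].
- have := forcing_number_twist twMM' fa fb => ba.
  have [->|ca] := eqVneq c a; first by exists M.
  have -> : c = b by lia.
  by exists M'; split=> //; apply: twist_pm twMM'.
- have ab := forcing_number_uniq fa fb.
  have -> : c = a by lia.
  by exists M.
- have pmX := twist_connected_pm connMX pmM.
  have [x fx] := forcing_number_exists pmX.
  case: (leqP c x) => [cx|xc]; first by apply: IH1 pmM fa fx _; rewrite ac cx.
  by apply: IH2 pmX fx fb _; rewrite (ltnW xc) cb.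
Qed.

Lemma forcing_spectrum_continuous :
  (forall M M', pm M -> pm M' -> twist_connected M M') ->
  continuous_nat_set (forcing_spectrum adj).
Proof.
move=> conn a b c [M [pmM fa]] [M' [pmM' fb]].
exact: forcing_spectrum_between (conn M M' pmM pmM') pmM fa fb.
Qed.

End Twist.

Notation twist_connected adj := (clos_refl_trans _ (twist adj)).

Section Cylinder.
Variables (n k : nat).
Hypotheses (n_gt2 : 2 < n) (n_odd : odd n) (k_odd : odd k).
Local Notation R := k.+1.
Local Notation V := (cyl_vertex k n).
Local Notation adj := (@cyl_adj k n).
Local Notation pm := (perfect_matching adj).
Implicit Types (M : {set {set V}}) (a b c : 'I_n).

(* [inord] sends the out-of-range row k.+1 to row 0, so [vedge a y] is an
   edge of the cylinder only when [y.+1 < R]; every use of it is guarded. *)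
Definition vtx a (y : nat) : V := (a, inord y).
Definition hedge a y := [set vtx a y; vtx (ordS a) y].
Definition vedge a y := [set vtx a y; vtx a y.+1].

Lemma ordS_neq a : (ordS a == a) = false.
Proof.
apply/negbTE; rewrite -val_eqE /=; have lt_an := ltn_ord a.
have [lt_a1n|ge_a1n] := ltnP a.+1 n; first by rewrite modn_small // gtn_eqF.
have -> : a.+1 = n by lia.
by rewrite modnn; lia.
Qed.

Lemma ordS2_neq a : (ordS (ordS a) == a) = false.
Proof.
apply/negbTE; rewrite -val_eqE /= -[(_ %% n).+1]addn1 modnDml addn1.
have lt_an := ltn_ord a.
have [lt_a2n|ge_a2n] := ltnP a.+2 n; first by rewrite modn_small // gtn_eqF.
have -> : a.+2 = (a.+2 - n) + n by lia.
by rewrite modnDr modn_small; lia.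
Qed.

Lemma vtx_eq a b y z : y < R -> z < R ->
  (vtx a y == vtx b z) = (a == b) && (y == z).
Proof. by move=> ltyR ltzR; rewrite xpair_eqE -[inord y == _]val_eqE /= !inordK. Qed.

Lemma vtxE (x : V) : x = vtx x.1 x.2.
Proof. by case: x => a y; rewrite /vtx inord_val. Qed.

Lemma cyl_adj_vtx a b y z : y < R -> z < R ->
  adj (vtx a y) (vtx b z) = ((y == z) && ((ordS a == b) || (ordS b == a))) ||
                            ((a == b) && ((y.+1 == z) || (z.+1 == y))).
Proof. by move=> ltyR ltzR; rewrite /cyl_adj /vtx /= !inordK. Qed.

Lemma cyl_adjC (x y : V) : adj x y = adj y x.
Proof.
case: x y => a y [b z]; rewrite /cyl_adj /=.
by congr (_ && _ || _ && _); [apply: eq_sym | apply: orbC | apply: eq_sym | apply: orbC].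
Qed.

Lemma mem_vtx2 p q a y b z : q < R -> y < R -> z < R ->
  (vtx p q \in [set vtx a y; vtx b z]) =
  ((p == a) && (q == y)) || ((p == b) && (q == z)).
Proof. by move=> *; rewrite in_set2 !vtx_eq. Qed.

Lemma hedge_eq a b y z : y < R -> z < R ->
  (hedge a y == hedge b z) = (a == b) && (y == z).
Proof.
move=> ltyR ltzR; apply/eqP/andP=> [eE|[/eqP-> /eqP->]] //.
have : vtx a y \in hedge b z by rewrite -eE set21.
have : vtx (ordS a) y \in hedge b z by rewrite -eE set22.
rewrite /hedge !mem_vtx2 //; have [_|] := eqVneq y z; last by rewrite !andbF.
have [// |nab] := eqVneq a b.
rewrite !andbT (inj_eq (@ordS_inj n)) (negbTE nab) orbF => /eqP<-.
by rewrite eq_sym ordS2_neq.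
Qed.

Lemma vedge_eq a b y z : y.+1 < R -> z.+1 < R ->
  (vedge a y == vedge b z) = (a == b) && (y == z).
Proof.
move=> ltyR ltzR; apply/eqP/andP=> [eE|[/eqP-> /eqP->]] //.
have : vtx a y \in vedge b z by rewrite -eE set21.
have : vtx a y.+1 \in vedge b z by rewrite -eE set22.
rewrite /vedge !mem_vtx2 ?(ltnW ltyR) ?(ltnW ltzR) //; have [_|] := eqVneq a b => //=.
by move=> ? ?; split=> //; lia.
Qed.

Lemma hedge_vedge_neq a b y z : y < R -> z.+1 < R ->
  (hedge a y == vedge b z) = false.
Proof.
move=> ltyR ltzR; apply/negbTE/eqP=> eE.
have : vtx a y \in vedge b z by rewrite -eE set21.
have : vtx (ordS a) y \in vedge b z by rewrite -eE set22.
rewrite /vedge !mem_vtx2 ?(ltnW ltzR) //; have [->|] := eqVneq a b => //.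
by rewrite ordS_neq.
Qed.

Lemma vedge_hedge_neq a b y z : y < R -> z.+1 < R ->
  (vedge b z == hedge a y) = false.
Proof. by move=> *; rewrite eq_sym hedge_vedge_neq. Qed.

Lemma incident_edge M E c y : pm M -> E \in M -> y < R -> vtx c y \in E ->
  [\/ E = hedge c y, E = hedge (ord_pred c) y, y.+1 < R /\ E = vedge c y
    | 0 < y /\ E = vedge c y.-1].
Proof.
move=> pmM ME ltyR vE.
have [w [adj_vw ->]] : exists w, adj (vtx c y) w /\ E = [set vtx c y; w].
  have [x [z [adj_xz [_ defE]]]] := pm_edge pmM ME.
  move: vE adj_xz; rewrite defE in_set2 => /orP[]/eqP<- adj_xz; first by exists z.
  by exists x; rewrite cyl_adjC setUC.
move: adj_vw; rewrite (vtxE w) cyl_adj_vtx //.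
case/orP=> /andP[/eqP<- /orP[]/eqP eq_w1].
- by constructor 1; rewrite -eq_w1.
- by constructor 2; rewrite /hedge -eq_w1 ordSK setUC.
- by constructor 3; split; [rewrite eq_w1 | rewrite -eq_w1].
- by constructor 4; split; [rewrite -eq_w1 | rewrite -eq_w1 /vedge setUC].
Qed.

Definition matched_down M c t := (0 < t < R) && (vedge c t.-1 \in M).

Lemma vertex_matched_once M a t : pm M -> t < R ->
  ((hedge a t \in M) + (hedge (ordS a) t \in M) +
   matched_down M (ordS a) t.+1 + matched_down M (ordS a) t)%N = 1%N.
Proof.
move=> pmM ltR; have [E ME vE] := pm_cover (vtx (ordS a) t) pmM.
have inM (X : {set V}) : vtx (ordS a) t \in X -> (X \in M) = (X == E).
  by move=> vX; apply/idP/eqP=> [MX|->//]; apply: pm_uniq pmM MX ME vX vE.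
rewrite /matched_down /= ltR andbT (inM (hedge a t)) ?set22 //.
rewrite (inM (hedge _ t)) ?set21 //.
have up : (t.+1 < R) && (vedge (ordS a) t \in M) =
          (t.+1 < R) && (vedge (ordS a) t == E).
  by case: ltnP => //= _; rewrite inM ?set21.
have down : (0 < t) && (vedge (ordS a) t.-1 \in M) =
            (0 < t) && (vedge (ordS a) t.-1 == E).
  by case: posnP => //= t_gt0; rewrite inM // /vedge prednK ?set22.
have upH x : (t.+1 < R) && (vedge (ordS a) t == hedge x t) = false.
  by case: ltnP => //= lt1; rewrite vedge_hedge_neq.
have downH x : (0 < t) && (vedge (ordS a) t.-1 == hedge x t) = false.
  by case: posnP => //= gt0; rewrite vedge_hedge_neq ?prednK.
have vV : 0 < t -> t.+1 < R -> (vedge (ordS a) t.-1 == vedge (ordS a) t) = false.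
  by move=> gt0 lt1; rewrite vedge_eq ?prednK // eqxx /=; lia.
rewrite up down.
case: (incident_edge pmM ME ltR vE) => [->|->|[lt1 ->]|[gt0 ->]]; rewrite ?ordSK.
- by rewrite !hedge_eq // !eqxx (eq_sym a) ordS_neq upH downH.
- by rewrite !hedge_eq // !eqxx ordS_neq upH downH.
- by rewrite !hedge_vedge_neq // lt1 eqxx; case: posnP => //= gt0; rewrite vV.
- by rewrite !hedge_vedge_neq ?prednK // gt0 eqxx eq_sym; case: ltnP => //= lt1; rewrite vV.
Qed.

Local Open Scope ring_scope.

(* [1 - 2 * (y %% 2)] is (-1)^y, written so that [lia] can reason about it. *)
Definition hstep M a (y : nat) : int :=
  if hedge a y \in M then 1 - 2 * (y %% 2)%N%:Z else 0.

Fixpoint height M a (t : nat) : int :=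
  if t is t'.+1 then height M a t' + hstep M a t' else 0.

Lemma heightS M a t : height M a t.+1 = height M a t + hstep M a t.
Proof. by []. Qed.

Lemma height_gap_sum M a t : pm M -> (t <= R)%N ->
  height M a t + height M (ordS a) t = ((t + matched_down M (ordS a) t) %% 2)%N%:Z.
Proof.
move=> pmM; elim: t => [|t IH] leR //=.
have := vertex_matched_once a pmM leR; move: (IH (ltnW leR)).
rewrite /hstep /matched_down /= leR.
by case: (hedge a t \in M); case: (hedge _ t \in M); case: (vedge _ t \in M);
  case: (0 < t < R)%N; case: (vedge _ t.-1 \in M) => /=; lia.
Qed.

Lemma height_top M a : pm M -> height M a R = 0.
Proof.
move=> pmM.
have alt b : height M b R + height M (ordS b) R = 0.
  by rewrite height_gap_sum // /matched_down ltnn andbF addn0 modn2 /= k_odd.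
have iter_alt j : height M (iter j (@ordS n) a) R =
    if odd j then - height M a R else height M a R.
  elim: j => [|j IH] //=; have := alt (iter j (@ordS n) a).
  by move: IH; case: (odd j) => /=; lia.
have iter_n : iter n (@ordS n) a = a.
  have val_iter j : (iter j (@ordS n) a : nat) = ((a + j) %% n)%N.
    elim: j => [|j IH] /=; first by rewrite addn0 modn_small.
    by rewrite IH -[((a + j) %% n).+1]addn1 modnDml addn1 addnS.
  by apply: val_inj; rewrite /= val_iter modnDr modn_small.
by move: (iter_alt n); rewrite iter_n n_odd; lia.
Qed.

Lemma height_flip M M' a y (b : bool) : (y.+1 < R)%N ->
  (forall a' s, (s < R)%N -> (hedge a' s \in M') =
     if (a' == a) && ((s == y) || (s == y.+1)) then b else hedge a' s \in M) ->
  (hedge a y \in M) = ~~ b -> (hedge a y.+1 \in M) = ~~ b ->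
  forall a' s, (s <= R)%N -> height M' a' s = height M a' s +
    if (a' == a) && (s == y.+1) then
      (if b then 1 - 2 * (y %% 2)%N%:Z else 2 * (y %% 2)%N%:Z - 1) else 0.
Proof.
move=> lt1 hM' hy hy1 a'; elim=> [|s IH] leR; first by rewrite andbF addr0.
rewrite /= IH ?(ltnW leR) // /hstep hM' //.
have [-> /=|] := eqVneq a' a; last by rewrite !addr0.
have [-> /=|ny] := eqVneq s y.
  by rewrite hy eqxx (ltn_eqF (ltnSn y)); case: b {hM' hy hy1 IH} => /=; lia.
have [-> /=|ny1] := eqVneq s y.+1.
  by rewrite hy1 (gtn_eqF (ltnSn y.+1)); case: b {hM' hy hy1 IH} => /=; lia.
by rewrite eqSS (negbTE ny) !addr0.
Qed.

Lemma square_matchings_cell a y : (y.+1 < R)%N ->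
  square_matchings adj [set hedge a y; hedge a y.+1] [set vedge (ordS a) y; vedge a y].
Proof.
move=> lt1; have lty := ltnW lt1.
exists (vtx a y), (vtx (ordS a) y), (vtx (ordS a) y.+1), (vtx a y.+1); split.
- split; rewrite ?cyl_adj_vtx ?eqxx ?orbT //=.
  by rewrite !inE !vtx_eq // !eqxx (eq_sym a) ordS_neq (ltn_eqF (ltnSn y)).
- by rewrite [hedge a y.+1]setUC.
- by rewrite [vedge a y]setUC.
Qed.

Lemma twist_hedges M a y : pm M -> (y.+1 < R)%N ->
  hedge a y \in M -> hedge a y.+1 \in M ->
  exists M', twist adj M M' /\ forall a' s, (s <= R)%N ->
    height M' a' s = height M a' s +
      if (a' == a) && (s == y.+1) then 2 * (y %% 2)%N%:Z - 1 else 0.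
Proof.
move=> pmM lt1 hy hy1; have sq := square_matchings_cell a lt1.
set D := [set hedge a y; hedge a y.+1]; set A := [set vedge (ordS a) y; vedge a y].
exists (exchange D A M); split.
  by split=> //; exists D, A; split=> //; apply/subsetP=> E; rewrite !inE => /orP[]/eqP->.
apply: (height_flip (b := false)) => // a' s ltsR.
rewrite !inE !hedge_vedge_neq ?hedge_eq ?(ltnW lt1) //=.
by case: (a' == a); case: (s == y); case: (s == y.+1).
Qed.

Lemma twist_vedges M a y : pm M -> (y.+1 < R)%N ->
  vedge a y \in M -> vedge (ordS a) y \in M ->
  exists M', twist adj M M' /\ forall a' s, (s <= R)%N ->
    height M' a' s = height M a' s +
      if (a' == a) && (s == y.+1) then 1 - 2 * (y %% 2)%N%:Z else 0.
Proof.
move=> pmM lt1 vy vSy; have sq := square_matchingsC (square_matchings_cell a lt1).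
have lty := ltnW lt1.
set D := [set vedge (ordS a) y; vedge a y]; set A := [set hedge a y; hedge a y.+1].
exists (exchange D A M); split.
  by split=> //; exists D, A; split=> //; apply/subsetP=> E; rewrite !inE => /orP[]/eqP->.
have no_hedge z : vtx a z \in hedge a z -> vtx a z \in vedge a y -> (z < R)%N ->
    (hedge a z \in M) = false.
  move=> hz vz ltz; apply/negbTE/negP=> hM.
  by have := pm_uniq pmM hM vy hz vz; move/eqP; rewrite hedge_vedge_neq.
apply: (height_flip (b := true)) => //.
- move=> a' s ltsR.
  rewrite !inE !hedge_vedge_neq ?hedge_eq //=.
  by case: (a' == a); case: (s == y); case: (s == y.+1).
- by rewrite no_hedge ?set21.
- by rewrite no_hedge ?set21 ?set22.
Qed.

Definition potential M := (\sum_(p : 'I_n * 'I_R.+1) absz (height M p.1 p.2))%N.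

Lemma potential_lt M M' a t (d : int) : (t <= R)%N ->
  (forall a' s, (s <= R)%N ->
     height M' a' s = height M a' s + if (a' == a) && (s == t) then d else 0) ->
  (absz (height M a t + d)%R < absz (height M a t))%N -> (potential M' < potential M)%N.
Proof.
move=> leR hM' lt_at; pose p0 : 'I_n * 'I_R.+1 := (a, Ordinal (leR : (t < R.+1)%N)).
rewrite /potential (bigD1 p0) // [X in (_ < X)%N](bigD1 p0) //= hM' // !eqxx /=.
rewrite (eq_bigr (fun p : 'I_n * 'I_R.+1 => absz (height M p.1 p.2))) ?ltn_add2r //.
move=> -[a' s] /= ne_p0.
rewrite hM'; last by rewrite -ltnS.
case: (eqVneq a' a) => [ea|] /=; last by rewrite addr0.
case: (eqVneq (s : nat) t) => [es|]; last by rewrite addr0.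
by exfalso; move/eqP: ne_p0; apply; rewrite ea; congr (_, _); apply: val_inj.
Qed.

(* Maximising [zigzag] rather than [absz] also excludes the value -h when the
   extreme value h is positive; [potential_descent_at] needs this to force the
   vertical edges next to a positive extreme. *)
Definition zigzag (x : int) : nat := (2 * absz x + (x < 0)%R)%N.

Lemma height_first_hit M a (v : int) : pm M -> v != 0 ->
  (exists t, (t <= R)%N && (height M a t == v)) ->
  (forall s, (s <= R)%N -> (zigzag (height M a s) <= zigzag v)%N) ->
  exists2 s, (s.+1 < R)%N &
    [/\ hedge a s \in M, height M a s.+1 = v & (s %% 2)%N = (v < 0) :> nat].
Proof.
move=> pmM v_neq0 ex_t bnd; case: (ex_minnP ex_t) => -[|s] /andP[leR /eqP hs] smin.
  by rewrite -hs in v_neq0.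
have ltR : (s.+1 < R)%N.
  rewrite ltn_neqAle leR andbT.
  by apply: contraNneq v_neq0 => eR; rewrite -hs eR height_top.
have hsv : height M a s != v.
  apply/eqP=> e; have := smin s.
  by rewrite e eqxx (ltnW (ltnW ltR)) => /(_ isT); rewrite ltnn.
exists s => //; have := bnd s (ltnW (ltnW ltR)); move: hs hsv.
rewrite /= /hstep /zigzag; case: (hedge a s \in M) => /= [e _ bd | ].
  by split=> //; lia.
by rewrite addr0 => ->; rewrite eqxx.
Qed.

Lemma potential_descent_at M a t : pm M -> (t <= R)%N -> height M a t != 0 ->
  (forall a' s, (s <= R)%N -> (zigzag (height M a' s) <= zigzag (height M a t))%N) ->
  exists M', twist adj M M' /\ (potential M' < potential M)%N.
Proof.
move=> pmM leR v_neq0 bnd; set v := height M a t in v_neq0 bnd.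
have [|s ltR [hs hs1 par]] := height_first_hit pmM v_neq0 _ (bnd a).
  by exists t; rewrite leR eqxx.
case hs2: (hedge a s.+1 \in M).
  have [M' [twM' hM']] := twist_hedges pmM ltR hs hs2.
  by exists M'; split=> //; apply: potential_lt (ltnW ltR) hM' _; rewrite hs1; lia.
have hs2v : height M a s.+2 = v by rewrite heightS hs1 /hstep hs2 addr0.
have ltR2 : (s.+2 < R)%N.
  rewrite ltn_neqAle ltR andbT.
  by apply: contraNneq v_neq0 => eR; rewrite -hs2v eR height_top.
(* Otherwise [height_gap_sum] would put a height beyond the extreme value
   [v] next to gap [a]. *)
have vert b : (b == a) || (ordS b == a) -> vedge (ordS b) s.+1 \in M.
  move=> ab; have := height_gap_sum b pmM (ltnW ltR2); rewrite /matched_down ltR2 andbT.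
  have := bnd b s.+2 (ltnW ltR2); have := bnd (ordS b) s.+2 (ltnW ltR2).
  case/orP: ab => /eqP->; rewrite hs2v /zigzag; case: (vedge _ s.+1 \in M) => //; lia.
have va : vedge a s.+1 \in M by rewrite -{1}(ord_predK a) vert // ord_predK eqxx orbT.
have vSa : vedge (ordS a) s.+1 \in M by rewrite vert ?eqxx.
have [M' [twM' hM']] := twist_vedges pmM ltR2 va vSa.
by exists M'; split=> //; apply: potential_lt (ltnW ltR2) hM' _; rewrite hs2v; lia.
Qed.

Lemma potential_descent M : pm M -> (exists p : 'I_n * 'I_R.+1, height M p.1 p.2 != 0) ->
  exists M', twist adj M M' /\ (potential M' < potential M)%N.
Proof.
move=> pmM [p0 hp0].
case: (@arg_maxnP _ p0 xpredT (fun p => zigzag (height M p.1 p.2)) isT) => -[a t] _ pmax.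
apply: (potential_descent_at (a := a) (t := t) pmM) => [||a' s leR].
- by rewrite -ltnS.
- by have := pmax p0 isT; move: hp0; rewrite /zigzag /=; lia.
- exact: (pmax (a', Ordinal (leR : (s < R.+1)%N))).
Qed.

Definition vertical M := forall a y, (y < R)%N -> hedge a y \notin M.

Lemma height0_vertical M : (forall p : 'I_n * 'I_R.+1, height M p.1 p.2 = 0) -> vertical M.
Proof.
move=> h0 a y ltR; have := h0 (a, Ordinal (ltR : (y.+1 < R.+1)%N)).
rewrite /= (h0 (a, Ordinal (ltnW ltR : (y < R.+1)%N))) /hstep.
by case: (hedge a y \in M) => //; lia.
Qed.

Lemma twist_connected_vertical M : pm M ->
  exists2 Z, twist_connected adj M Z & pm Z /\ vertical Z.
Proof.
elim: {M}(potential M).+1 {-2}M (ltnSn (potential M)) => // m IH M ltm pmM.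
have [/existsP[p hp]|] := boolP [exists p : 'I_n * 'I_R.+1, height M p.1 p.2 != 0].
  have [M' [twM' ltM']] := potential_descent pmM (ex_intro _ p hp).
  have [Z connZ vZ] := IH M' (leq_trans ltM' ltm) (twist_pm twM').
  by exists Z => //; apply: rt_trans connZ; apply: rt_step.
rewrite negb_exists => /forallP h0; exists M; first exact: rt_refl.
by split=> //; apply: height0_vertical => p; apply/eqP; rewrite -[_ == _]negbK h0.
Qed.

Lemma vertical_vedge M c y : pm M -> vertical M -> (y < R)%N ->
  ((y.+1 < R)%N && (vedge c y \in M)) = ~~ odd y.
Proof.
move=> pmM vM; elim: y => [|y IH] ltR;
  have := vertex_matched_once (ord_pred c) pmM ltR;
  rewrite ord_predK (negbTE (vM _ _ ltR)) (negbTE (vM _ _ ltR)) /matched_down /=.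
  by case: (_ && _).
by rewrite (IH (ltnW ltR)); case: (_ && _); case: (odd y).
Qed.

Lemma vertical_uniq M1 M2 : pm M1 -> pm M2 -> vertical M1 -> vertical M2 -> M1 = M2.
Proof.
suff sub M M' : pm M -> pm M' -> vertical M -> vertical M' -> M \subset M'.
  by move=> pm1 pm2 v1 v2; apply/eqP; rewrite eqEsubset !sub.
move=> pmM pmM' vM vM'; apply/subsetP=> E ME.
have [x [x' [_ [_ defE]]]] := pm_edge pmM ME.
have xE : vtx x.1 x.2 \in E by rewrite -vtxE defE set21.
have vmem z : (z.+1 < R)%N -> E = vedge x.1 z -> E \in M'.
  move=> ltz eE; rewrite eE in ME *.
  have := vertical_vedge x.1 pmM' vM' (ltnW ltz); rewrite ltz /= => ->.
  by rewrite -(vertical_vedge x.1 pmM vM (ltnW ltz)) ltz ME.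
case: (incident_edge pmM ME (ltn_ord x.2) xE) => [eE|eE|[lt1 eE]|[gt0 eE]].
- by move: (vM x.1 x.2 (ltn_ord _)); rewrite -eE ME.
- by move: (vM (ord_pred x.1) x.2 (ltn_ord _)); rewrite -eE ME.
- exact: vmem lt1 eE.
- by apply: vmem eE; rewrite prednK.
Qed.

Lemma cylinder_twist_connected M M' : pm M -> pm M' -> twist_connected adj M M'.
Proof.
move=> pmM pmM'.
have [Z connMZ [pmZ vZ]] := twist_connected_vertical pmM.
have [Z' connM'Z' [pmZ' vZ']] := twist_connected_vertical pmM'.
rewrite (vertical_uniq pmZ' pmZ vZ' vZ) in connM'Z'.
exact: rt_trans connMZ (twist_connected_sym connM'Z').
Qed.

End Cylinder.

Theorem corollary5p5 (n m : nat) :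
  1 <= n -> 1 <= m ->
  continuous_nat_set (C_graph_spectrum (2 * m - 1) (2 * n + 1)).
Proof.
move=> n_ge1 m_ge1; apply/forcing_spectrum_continuous/cylinder_twist_connected; lia.
Qed.
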